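(* Let $X$ be a finite-dimensional simplicial complex such that for all vertices $x,y$ of $X$, $\Sigma_x\subseteq\Sigma_y$ implies $x=y$. Then $X$ is simplicially isomorphic to $\mathcal{N}(\mathcal{N}(X))$.
   Context: For a vertex $x$ of $X$, $\Sigma_x$ is the collection of maximal simplices of $X$ containing $x$. A maximal simplex of a simplicial complex $Y$ is a maximal collection of vertices such that every finite subset is a simplex of $Y$. For a simplicial complex $Y$, $\mathcal{N}(Y)$ is the nerve of the collection of maximal simplices of $Y$: its vertices are the maximal simplices of $Y$, and a finite set of them is a simplex iff their common intersection is non-empty. *)

From mathcomp Require Import all_boot.
From mathcomp Require Import boolp classical_sets cardinality.
Set Implicit Arguments. Unset Strict Implicit. Unset Printing Implicit Defensive.
Local Open Scope classical_set_scope.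

Record sc := SC { vert : Type; simplex : set (set vert) }.
Arguments simplex : clear implicits.

Definition is_sc (K : sc) : Prop :=
  [/\ (forall s, simplex K s -> finite_set s /\ s !=set0),
      (forall s t, simplex K s -> t `<=` s -> t !=set0 -> simplex K t)
    & (forall v : vert K, simplex K [set v])].

Definition finite_dim (K : sc) : Prop :=
  exists n : nat, forall s, simplex K s -> (s #<= `I_n)%card.

Definition fin_closed (K : sc) (A : set (vert K)) : Prop :=
  forall B, finite_set B -> B !=set0 -> B `<=` A -> simplex K B.

Definition maxsimp (K : sc) (M : set (vert K)) : Prop :=
  [/\ M !=set0, @fin_closed K M
    & forall M', @fin_closed K M' -> M `<=` M' -> M' = M].

Definition Sigma (K : sc) (x : vert K) : set (set (vert K)) :=
  [set M | @maxsimp K M /\ M x].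

Definition nerve (K : sc) : sc :=
  @SC {M : set (vert K) | @maxsimp K M}
      (fun s => [/\ finite_set s, s !=set0
                  & exists x : vert K, forall M, s M -> proj1_sig M x]).

Definition sc_iso (K L : sc) : Prop :=
  exists f : vert K -> vert L,
    bijective f /\ forall s : set (vert K), simplex K s <-> simplex L (f @` s).

(* Write star x for the set of maximal simplices containing x, i.e. Sigma_x
   seen as a set of vertices of N(X).  In a finite-dimensional complex every
   simplex lies in a maximal simplex and maximal simplices are finite; a
   Helly-type argument then shows that a set of vertices of N(X) all of whose
   finite subsets have a common point has itself a common point y.  Hence every
   maximal simplex of N(X) lies in, so equals, some star y, and star x is itself
   maximal: a larger one lies in some star y, so Sigma_x is included in Sigma_y
   and y = x.  Thus x |-> star x is a bijection onto the vertices of N(N(X)),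
   and finitely many stars share a point M exactly when the corresponding
   vertices lie in the maximal simplex M, i.e. span a simplex of X. *)
From mathcomp Require Import all_boot.
From mathcomp Require Import boolp classical_sets cardinality.
Set Implicit Arguments. Unset Strict Implicit.
Local Open Scope classical_set_scope.

Lemma simplex_fin_closed (X : sc) (s : set (vert X)) :
  is_sc X -> simplex X s -> fin_closed s.
Proof. by case=> _ sub_simplex _ ss B _ B0 Bs; exact: sub_simplex ss Bs B0. Qed.

Section FiniteDimension.

Variables (X : sc) (n : nat).
Hypothesis dimX : forall s, simplex X s -> (s #<= `I_n)%card.

Lemma fin_closed_points_le_dim (A : set (vert X)) k (g : nat -> vert X) :
  fin_closed A -> {in `I_k &, injective g} -> g @` `I_k `<=` A -> (k <= n)%N.
Proof.
case: k => [//|k] fcA g_inj gA.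
have sg : simplex X (g @` `I_k.+1).
  apply: fcA => //; first exact/finite_image/finite_II.
  by exists (g 0%N), 0%N.
have := inj_card_eq g_inj; rewrite card_eq_le => /andP[_ le_Ik_img].
by rewrite -card_le_II; apply: card_le_trans le_Ik_img (dimX sg).
Qed.

Lemma points_extend (A : set (vert X)) k (g : nat -> vert X) v :
  {in `I_k &, injective g} -> g @` `I_k `<=` A -> A v -> ~ (g @` `I_k) v ->
  exists g', {in `I_k.+1 &, injective g'} /\ g' @` `I_k.+1 `<=` A.
Proof.
move=> g_inj gA Av gNv; exists (fun i => if i == k then v else g i); split.
  move=> i j; rewrite !in_setE /= !ltnS => ik jk.
  case: eqP => [->|/eqP ik']; case: eqP => [->|/eqP jk'] //.
  - by move=> vgj; case: gNv; exists j => //=; rewrite ltn_neqAle jk'.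
  - by move=> giv; case: gNv; exists i => //=; rewrite ltn_neqAle ik'.
  - by apply: g_inj; rewrite in_setE /= ltn_neqAle ?ik' ?jk'.
move=> _ [i ik <-]; case: eqP => [//|/eqP ik']; apply: gA.
by exists i => //=; rewrite ltn_neqAle ik' -ltnS.
Qed.

(* A fin_closed extension of B holding the largest number k <= n of distinct
   points g 0, ..., g (k-1) is maximal, and it is contained in those points. *)
Lemma finite_maxsimp_ext (B : set (vert X)) : fin_closed B -> B !=set0 ->
  exists M, [/\ maxsimp M, B `<=` M & finite_set M].
Proof.
move=> fcB [v Bv].
pose P k := exists A (g : nat -> vert X), [/\ fin_closed A, B `<=` A,
  {in `I_k &, injective g} & g @` `I_k `<=` A].
have P0 : `[< P 0%N >].
  apply/asboolP; exists B, (fun=> v); split => //.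
    by move=> i j; rewrite inE.
  by move=> w [i]; rewrite /= ltn0.
have Pbound k : `[< P k >] -> (k <= n)%N.
  move=> /asboolP[A [g [fcA _ g_inj gA]]].
  exact: fin_closed_points_le_dim g_inj gA.
case: (ex_maxnP (ex_intro _ 0%N P0) Pbound).
move=> k /asboolP[A [g [fcA BA g_inj gA]]] kmax.
have NPk1 : ~ P k.+1 by move/asboolP/kmax; rewrite ltnn.
have maxA A' : fin_closed A' -> A `<=` A' -> A' `<=` g @` `I_k.
  move=> fcA' AA' w A'w; apply: contrapT => gNw; apply: NPk1.
  have [g' [g'_inj g'A']] := points_extend g_inj (subset_trans gA AA') A'w gNw.
  by exists A', g'; split => //; apply: subset_trans AA'.
exists A; split => //.
- split=> //; first by exists v; apply: BA.
  move=> A' fcA' AA'; apply/seteqP; split => //.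
  exact: subset_trans (maxA _ fcA' AA') gA.
- apply: sub_finite_set (maxA A fcA (@subset_refl _ A)) _.
  exact/finite_image/finite_II.
Qed.

Lemma maxsimp_finite (M : set (vert X)) : maxsimp M -> finite_set M.
Proof.
case=> M0 fcM maxM; have [A [[_ fcA _] MA finA]] := finite_maxsimp_ext fcM M0.
by rewrite -(maxM A).
Qed.

Lemma simplex_sub_maxsimp (s : set (vert X)) : is_sc X -> simplex X s ->
  exists M, maxsimp M /\ s `<=` M.
Proof.
move=> scX ss; have [simplexP _ _] := scX; have [_ s0] := simplexP s ss.
have [M [maxM sM _]] := finite_maxsimp_ext (simplex_fin_closed scX ss) s0.
by exists M.
Qed.

End FiniteDimension.

Section DoubleNerve.

Variable X : sc.
Hypotheses (scX : is_sc X) (finite_maxsimp : forall M, @maxsimp X M -> finite_set M)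
  (simplex_maxsimp : forall s, simplex X s -> exists M, @maxsimp X M /\ s `<=` M).

(* Otherwise choose, for each y in M0, some avoid y in S missing y: then the
   finite subfamily {M0} u avoid @` M0 of S has empty intersection. *)
Lemma nerve_fin_closed_meet (S : set (vert (nerve X))) :
  fin_closed S -> S !=set0 -> exists y, forall M, S M -> sval M y.
Proof.
move=> fcS [M0 SM0]; apply: contrapT => noMeet.
have [avoid avoidP] : {avoid & forall y, S (avoid y) /\ ~ sval (avoid y) y}.
  apply: (choice (P := fun y M => S M /\ ~ sval M y)) => y.
  apply: contrapT => NSy; apply: noMeet; exists y => M SM.
  by apply: contrapT => NMy; apply: NSy; exists M.
pose F := [set M0] `|` (avoid @` sval M0).
have : simplex (nerve X) F.
  apply: fcS.
  - rewrite finite_setU; split; first exact: finite_set1.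
    exact/finite_image/finite_maxsimp/(svalP M0).
  - by exists M0; left.
  - by move=> M [->|[y _ <-]] //; case: (avoidP y).
case=> _ _ [x Fx]; have M0x : sval M0 x by apply: Fx; left.
by have [_] := avoidP x; apply; apply: Fx; right; exists x.
Qed.

Hypothesis sepX : forall x y : vert X, Sigma x `<=` Sigma y -> x = y.

Definition star (x : vert X) : set (vert (nerve X)) := [set M | sval M x].

Lemma star_sub_eq x y : star x `<=` star y -> x = y.
Proof.
move=> xy; apply: sepX => M [maxM Mx]; split => //.
exact: (xy (exist _ M maxM)).
Qed.

Lemma star_neq0 x : star x !=set0.
Proof.
have [_ _ simplex_x] := scX; have [M [maxM Mx]] := simplex_maxsimp (simplex_x x).
by exists (exist _ M maxM); apply: Mx.
Qed.

Lemma fin_closed_star x : fin_closed (star x).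
Proof. by move=> B finB B0 Bx; split => //; exists x. Qed.

Lemma maxsimp_star x : maxsimp (star x).
Proof.
split; [exact: star_neq0 | exact: fin_closed_star |] => S fcS xS.
have [y Sy] := nerve_fin_closed_meet fcS (subset_nonempty xS (star_neq0 x)).
have Sy' : S `<=` star y by move=> M /Sy.
by have yx := star_sub_eq (subset_trans xS Sy'); subst y; apply/seteqP.
Qed.

Lemma maxsimp_nerve_star (S : set (vert (nerve X))) :
  maxsimp S -> exists x, star x = S.
Proof.
case=> S0 fcS maxS; have [x Sx] := nerve_fin_closed_meet fcS S0.
by exists x; apply: maxS; [exact: fin_closed_star | move=> M /Sx].
Qed.

Definition star_vertex (x : vert X) : vert (nerve (nerve X)) :=
  exist _ (star x) (maxsimp_star x).

Lemma star_vertex_bij : bijective star_vertex.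
Proof.
have inj_sv : injective star_vertex.
  by move=> x y /(congr1 sval) /= xy; apply: star_sub_eq; rewrite xy.
have [inv inv_K] : {inv & forall S, star_vertex (inv S) = S}.
  apply: (choice (P := fun S x => star_vertex x = S)) => -[S maxS].
  by have [x xS] := maxsimp_nerve_star maxS; exists x; apply: eq_exist.
by exists inv => [x|//]; apply: inj_sv; rewrite inv_K.
Qed.

Lemma simplex_star_vertex (s : set (vert X)) :
  simplex X s <-> simplex (nerve (nerve X)) (star_vertex @` s).
Proof.
split=> [ss | [_ [_ [v sv _]] [M sMx]]].
  have [simplexP _ _] := scX; have [fins [v sv]] := simplexP s ss.
  have [M [maxM sM]] := simplex_maxsimp ss.
  split; [exact: finite_image | by exists (star_vertex v), v |].
  by exists (exist _ M maxM) => _ [x sx <-]; exact: sM.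
have sM : s `<=` sval M by move=> x sx; apply: (sMx (star_vertex x)); exists x.
have [_ fcM _] := svalP M; apply: fcM; last exact: sM.
- exact: sub_finite_set sM (finite_maxsimp (svalP M)).
- by exists v.
Qed.

End DoubleNerve.

Theorem theorem3p1 (X : sc) :
  is_sc X -> finite_dim X ->
  (forall x y : vert X, Sigma x `<=` Sigma y -> x = y) ->
  sc_iso X (nerve (nerve X)).
Proof.
move=> scX [n dimX] sepX.
pose f := star_vertex scX (maxsimp_finite dimX) (simplex_sub_maxsimp dimX ^~ scX) sepX.
exists f; split; [exact: star_vertex_bij | exact: simplex_star_vertex].
Qed.
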